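(* Let $\nu\ge2$ and $2\le n,m\le\nu$ be integers. Let $A(\nu;n,m)$ be the matrix with $m-1$ rows and $n+m-2$ columns whose $i$-th row ($1\le i\le m-1$) has the entries $\nu-n+1,\nu-n+2,\ldots,\nu$ in columns $i,i+1,\ldots,i+n-1$ respectively, and $0$ in all other columns; define $A(\nu;m,n)$ analogously with the roles of $n$ and $m$ exchanged (so it has $n-1$ rows and $n+m-2$ columns). Let $X(\nu;n,m)$ be the $(n+m-2)\times(n+m-2)$ matrix obtained by placing $A(\nu;n,m)$ on top of $A(\nu;m,n)$. If one marks $n+m-2$ nonzero entries of $X(\nu;n,m)$ such that each row and each column contains exactly one marked entry, then the sum of the marked entries equals $$(\nu-n+1)(m-1)+\nu(n-1).$$ *)

From mathcomp Require Import all_boot all_order all_algebra all_fingroup.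
Set Implicit Arguments. Unset Strict Implicit. Unset Printing Implicit Defensive.

(* Entry (0-indexed row i, column j) of A(nu; n, m):
   row i has nu-n+1, ..., nu in columns i, ..., i+n-1, and 0 elsewhere.
   (The number of rows, m-1, is imposed where A is used.) *)
Definition A_entry (nu n : nat) (i j : nat) : nat :=
  if (i <= j) && (j <= i + n - 1) then nu - n + 1 + (j - i) else 0.

Definition X_entry (nu n m : nat) (r j : nat) : nat :=
  if r < m - 1 then A_entry nu n r j else A_entry nu m (r - (m - 1)) j.

Definition Xmat (nu n m : nat) : 'M[nat]_(n + m - 2) :=
  \matrix_(r < n + m - 2, j < n + m - 2) X_entry nu n m r j.

(* A nonzero entry of X in row r and column j satisfies X r j + r = w r + j,
   where w r is nu - n + 1 on the rows of A(nu;n,m) and nu on the rows of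
   A(nu;m,n).  Summing along a permutation, the column indices and the row
   indices cancel, so every admissible marking has total sum \sum_r w r. *)
From mathcomp Require Import all_boot all_order all_algebra all_fingroup.
From mathcomp Require Import zify.

Lemma sum_perm_shift (T : finType) (s : {perm T}) (f a b : T -> nat) :
  (forall x, a x + f x = b x + f (s x)) -> \sum_x a x = \sum_x b x.
Proof.
move=> shift; apply: (@addIn (\sum_x f x)).
rewrite [X in _ = _ + X](reindex_inj (@perm_inj _ s)) -!big_split /=.
by apply: eq_bigr => x _; rewrite shift.
Qed.

Lemma sum_nat_two_blocks (k l a b : nat) :
  \sum_(0 <= r < k + l) (if r < k then a else b) = k * a + l * b.
Proof.
rewrite (big_cat_nat _ (leq_addr l k)) //=.
rewrite (@eq_big_nat _ _ _ 0 k _ (fun=> a)); last by move=> r /andP[_ ->].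
rewrite (@eq_big_nat _ _ _ k (k + l) _ (fun=> b)); last by move=> r /andP[kr _]; rewrite ltnNge kr.
by rewrite !sum_nat_const_nat subn0 addKn mulnC [l * b]mulnC.
Qed.

Definition X_row_weight (nu n m r : nat) : nat := if r < m - 1 then nu - n + 1 else nu.

Lemma X_entry_add_row (nu n m r j : nat) : 0 < m <= nu ->
  X_entry nu n m r j != 0 -> X_entry nu n m r j + r = X_row_weight nu n m r + j.
Proof.
rewrite /X_entry /A_entry /X_row_weight => /andP[m_gt0 m_le_nu].
by case: ltnP => hr; case: ifP => // /andP[le_rj le_j_end] _; lia.
Qed.

Theorem lemma2p30 (nu n m : nat) (hnu : 2 <= nu) (hn : 2 <= n) (hnnu : n <= nu)
    (hm : 2 <= m) (hmnu : m <= nu) (s : 'S_(n + m - 2)) :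
  (forall r : 'I_(n + m - 2), Xmat nu n m r (s r) != 0) ->
  \sum_(r < n + m - 2) Xmat nu n m r (s r) = (nu - n + 1) * (m - 1) + nu * (n - 1).
Proof.
move=> marked.
rewrite (@sum_perm_shift _ s (fun r => r : nat) _ (X_row_weight nu n m)); last first.
  move=> r; rewrite mxE; apply: X_entry_add_row; first by rewrite hmnu andbT ltnW.
  by have := marked r; rewrite mxE.
have -> : n + m - 2 = (m - 1) + (n - 1) by lia.
by rewrite -(big_mkord xpredT (X_row_weight nu n m)) sum_nat_two_blocks mulnC [nu * _]mulnC.
Qed.
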